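(* Let $G$ be a finite, simple, undirected graph of chromatic number $3$, and let $D$ be an orientation of $G$. Then there is a $3$-coloring $f$ of $G$ such that $D$ contains a directed full $f$-rainbow path, i.e. a directed path $v_1v_2v_3$ in $D$ (with arcs $(v_1,v_2)$ and $(v_2,v_3)$) whose three vertices receive three distinct colors under $f$.
   Context: A $3$-coloring of $G$ is a function $f:V(G)\to\{1,2,3\}$ with $f(u)\neq f(v)$ for every two adjacent vertices $u,v$. An orientation of $G$ is a digraph obtained by replacing each edge $uv$ by exactly one of the arcs $(u,v)$ or $(v,u)$. For a $k$-coloring $f$, a full $f$-rainbow path is a path of order $k$ whose vertices have pairwise distinct colors. *)

From mathcomp Require Import all_boot.
Set Implicit Arguments. Unset Strict Implicit. Unset Printing Implicit Defensive.

Definition simple_graph (T : finType) (e : rel T) : Prop :=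
  symmetric e /\ irreflexive e.

Definition proper_coloring (T : finType) (e : rel T) (k : nat) (f : T -> 'I_k) : Prop :=
  forall u v, e u v -> f u != f v.

Definition k_colorable (T : finType) (e : rel T) (k : nat) : Prop :=
  exists f : T -> 'I_k, proper_coloring e f.

Definition chromatic_number_eq (T : finType) (e : rel T) (k : nat) : Prop :=
  k_colorable e k /\ forall j, j < k -> ~ k_colorable e j.

Definition orientation (T : finType) (e : rel T) (D : rel T) : Prop :=
  (forall u v, D u v -> e u v) /\
  (forall u v, e u v -> (D u v && ~~ D v u) || (D v u && ~~ D u v)).

Definition has_directed_rainbow_P3 (T : finType) (D : rel T) (f : T -> 'I_3) : Prop :=
  exists v1 v2 v3 : T,
    [/\ D v1 v2, D v2 v3 & [/\ f v1 != f v2, f v2 != f v3 & f v1 != f v3]].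

(* Call a vertex internal if it has both an in-arc and an out-arc.  If some
   arc x -> y joins two internal vertices, take any proper 3-coloring f; if it
   has no rainbow directed path, then the two ends of every directed path of
   length two share a color, so every neighbour of x has the color of y, and
   recoloring x with the third color makes x -> y -> z rainbow for any arc y -> z.  Otherwise the
   coloring "source / sink / internal" is proper; it has a rainbow path
   p -> v -> q as soon as some vertex v is internal, and if no vertex is
   internal, coloring by "has an in-arc" 2-colors G, which is impossible. *)

From mathcomp Require Import all_boot.
From Stdlib Require Import Classical.

Lemma exists_third_color (a b : 'I_3) : exists t : 'I_3, t != a /\ t != b.
Proof.
case: a b => [[|[|[|a]]] Ha] [[|[|[|b]]] Hb] //;
  first [ by exists (@Ordinal 3 0 isT) | by exists (@Ordinal 3 1 isT)
        | by exists (@Ordinal 3 2 isT) ].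
Qed.

Section Orientation.
Local Set Implicit Arguments.
Local Unset Strict Implicit.

Variables (T : finType) (e D : rel T).
Hypothesis De : orientation e D.

Definition has_in (v : T) := [exists u, D u v].
Definition has_out (v : T) := [exists w, D v w].
Definition internal (v : T) := has_in v && has_out v.

Lemma arc_has_in u v : D u v -> has_in v.
Proof. by move=> Duv; apply/existsP; exists u. Qed.

Lemma arc_has_out u v : D u v -> has_out u.
Proof. by move=> Duv; apply/existsP; exists v. Qed.

Lemma proper_coloring_arcs k (f : T -> 'I_k) :
  (forall u v, D u v -> f u != f v) -> proper_coloring e f.
Proof.
move=> fD u v /(proj2 De u v) /orP [] /andP [Dvu _]; first exact: fD.
by rewrite eq_sym; apply: fD.
Qed.

Lemma rainbow_free_path_ends (f : T -> 'I_3) p v q :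
  proper_coloring e f -> ~ has_directed_rainbow_P3 D f ->
  D p v -> D v q -> f p = f q.
Proof.
move=> fP norainbow Dpv Dvq; apply/eqP/negPn/negP => fpq; apply: norainbow.
by exists p, v, q; split=> //; split=> //; apply: fP; apply: (proj1 De).
Qed.

Section NoInternalArc.

Hypothesis no_internal_arc : forall u v, D u v -> internal u -> internal v -> False.

Definition level_coloring (v : T) : 'I_3 :=
  if ~~ has_in v then @Ordinal 3 0 isT
  else if ~~ has_out v then @Ordinal 3 1 isT else @Ordinal 3 2 isT.

Lemma level_coloring_proper : proper_coloring e level_coloring.
Proof.
apply: proper_coloring_arcs => u v Duv.
rewrite /level_coloring (arc_has_in Duv) (arc_has_out Duv) /=.
case: (boolP (has_in u)) => inu //=; case: (boolP (has_out v)) => //= outv.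
case: (no_internal_arc Duv).
  by rewrite /internal inu (arc_has_out Duv).
by rewrite /internal outv (arc_has_in Duv).
Qed.

Lemma level_coloring_rainbow v :
  internal v -> has_directed_rainbow_P3 D level_coloring.
Proof.
move=> /[dup] intv /andP [/existsP [p Dpv] /existsP [q Dvq]].
have inp : has_in p = false.
  apply/negbTE/negP=> inp; apply: (no_internal_arc Dpv) => //.
  by rewrite /internal inp (arc_has_out Dpv).
have outq : has_out q = false.
  apply/negbTE/negP=> outq; apply: (no_internal_arc Dvq) => //.
  by rewrite /internal outq (arc_has_in Dvq).
exists p, v, q; split=> //.
by move: intv; rewrite /level_coloring /internal inp outq (arc_has_in Dvq) => /andP [-> ->].
Qed.

End NoInternalArc.

Lemma two_colorable_of_no_internal :
  (forall v, ~~ internal v) -> k_colorable e 2.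
Proof.
move=> nointernal.
exists (fun v => if has_in v then @Ordinal 2 1 isT else @Ordinal 2 0 isT).
apply: proper_coloring_arcs => u v Duv; rewrite (arc_has_in Duv).
case: (boolP (has_in u)) => // inu.
by move: (nointernal u); rewrite /internal inu (arc_has_out Duv).
Qed.

Hypotheses (e_sym : symmetric e) (e_irr : irreflexive e).

Lemma recolor_rainbow (f : T -> 'I_3) x y :
  proper_coloring e f -> D x y -> has_in x -> has_out y ->
  exists g : T -> 'I_3, proper_coloring e g /\ has_directed_rainbow_P3 D g.
Proof.
move=> fP Dxy /existsP [a Dax] /existsP [b Dyb].
have [rainbow | norainbow] := classic (has_directed_rainbow_P3 D f).
  by exists f.
have ends p v q := @rainbow_free_path_ends f p v q fP norainbow.
have [t [tx ty]] := exists_third_color (f x) (f y).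
have nbr_color v : e x v -> f v = f y.
  move=> /(proj2 De x v) /orP [] /andP [Dxv _].
    by rewrite -(ends a x v Dax Dxv) (ends a x y Dax Dxy).
  exact: ends Dxv Dxy.
have yx : (y == x) = false.
  by apply/eqP=> yx; move: (proj1 De _ _ Dxy); rewrite yx e_irr.
have bx : (b == x) = false.
  apply/eqP=> bx; rewrite bx in Dyb.
  by have := proj2 De x y (proj1 De _ _ Dxy); rewrite Dxy Dyb.
exists (fun z => if z == x then t else f z); split.
- move=> u v euv /=.
  case: (eqVneq u x) => [ux|_]; case: (eqVneq v x) => [vx|_].
  + by rewrite ux vx e_irr in euv.
  + by rewrite nbr_color -?ux.
  + by rewrite eq_sym nbr_color // e_sym -vx.
  + exact: fP.
- exists x, y, b; rewrite eqxx yx bx; split=> //; split=> //.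
    by apply: fP; apply: (proj1 De).
  by rewrite -(ends x y b Dxy Dyb).
Qed.

End Orientation.

Theorem theorem4 (T : finType) (e D : rel T) :
  simple_graph e -> chromatic_number_eq e 3 -> orientation e D ->
  exists f : T -> 'I_3, proper_coloring e f /\ has_directed_rainbow_P3 D f.
Proof.
move=> [e_sym e_irr] [[f fP] not_colorable] De.
have [[x [y [Dxy /andP [inx _] /andP [_ outy]]]] | no_arc] :=
  classic (exists x y, [/\ D x y, internal D x & internal D y]).
  exact: recolor_rainbow fP Dxy inx outy.
have no_internal_arc u v : D u v -> internal D u -> internal D v -> False.
  by move=> Duv intu intv; apply: no_arc; exists u, v.
have [[v intv] | nointernal] := classic (exists v, internal D v).
  exists (level_coloring D); split; first exact: level_coloring_proper.
  exact: level_coloring_rainbow intv.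
case: (not_colorable 2) => //; apply: two_colorable_of_no_internal De _ => v.
by apply/negP => intv; apply: nointernal; exists v.
Qed.
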